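(* With the setting in the context, call two operators $Q_m,Q_{m'}$ with $m,m'\in\ker(\delta_0)$ equivalent if they have the same eigenvalue on every ground state $\mathcal A_0|f\rangle$, $f\in\ker(\delta^0)$ (equivalently, $m$ and $m'$ agree on $\ker(\delta^0)$). Then the assignment sending $Q_m$ to the character $\bar m:H^0(C,G)\to U(1)$, $\bar m([f])=m(f)$, is well defined and induces a bijection between the set of equivalence classes of such operators and the character group $\widehat{H^0(C,G)}=\mathrm{Hom}(H^0(C,G),U(1))$.
   Context: $(C_\bullet,\partial^C_\bullet)$ is a chain complex with each $C_n$ free abelian on a finite set $K_n$, $K_n\ne\emptyset$ for finitely many $n$; $(G_\bullet,\partial^G_\bullet)$ is a chain complex of finite abelian groups. $\mathrm{hom}(C,G)^p=\prod_n\mathrm{Hom}(C_n,G_{n-p})$ with $(\delta^pf)_n=f_{n-1}\partial^C_n-(-1)^p\partial^G_{n-p}f_n$, and $H^0(C,G)=\ker\delta^0/\mathrm{im}\,\delta^{-1}$. $\mathrm{hom}(C,G)_p=\mathrm{Hom}(\mathrm{hom}(C,G)^p,U(1))$ (written additively), $\delta_0:\mathrm{hom}(C,G)_0\to\mathrm{hom}(C,G)_{-1}$, $\delta_0m=m\circ\delta^{-1}$. $\mathcal H=\bigotimes_n\bigotimes_{x\in K_n}\mathbb C[G_n]$ with orthonormal basis $|f\rangle$, $f\in\mathrm{hom}(C,G)^0$. $Q_m|f\rangle=m(f)|f\rangle$, $P_t|f\rangle=|f+t\rangle$, and $\mathcal A_0=\frac1{|\mathrm{hom}(C,G)^{-1}|}\sum_{t\in\mathrm{hom}(C,G)^{-1}}P_{\delta^{-1}t}$.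 *)

From HB Require Import structures.
From mathcomp Require Import all_boot all_order all_algebra all_fingroup all_field.
Set Implicit Arguments. Unset Strict Implicit. Unset Printing Implicit Defensive.
Import Order.TTheory GRing.Theory Num.Theory.
Local Open Scope ring_scope.

Section DProd.
Variables (I : finType) (F : I -> finZmodType).

Definition dprodZ := {dffun forall i : I, F i}.
HB.instance Definition _ := Finite.on dprodZ.

Definition dprod_zero : dprodZ := @finfun I F (fun i => 0).
Definition dprod_opp (f : dprodZ) : dprodZ := @finfun I F (fun i => - f i).
Definition dprod_add (f g : dprodZ) : dprodZ := @finfun I F (fun i => f i + g i).

Lemma dprod_addA : associative dprod_add.
Proof. by move=> f g h; apply/ffunP=> i; rewrite !ffunE addrA. Qed.
Lemma dprod_addC : commutative dprod_add.
Proof. by move=> f g; apply/ffunP=> i; rewrite !ffunE addrC. Qed.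
Lemma dprod_add0 : left_id dprod_zero dprod_add.
Proof. by move=> f; apply/ffunP=> i; rewrite !ffunE add0r. Qed.
Lemma dprod_addN : left_inverse dprod_zero dprod_opp dprod_add.
Proof. by move=> f; apply/ffunP=> i; rewrite !ffunE addNr. Qed.

HB.instance Definition _ := GRing.isZmodule.Build dprodZ
  dprod_addA dprod_addC dprod_add0 dprod_addN.
End DProd.

(* The chain complex C: C_n is free abelian on K_n = {x : cell | deg x = n}; *)
(* the boundary is encoded by its integer matrix bd x y (coefficient of the  *)
(* basis element y in the boundary of x).                                    *)
Record cell_complex := CellComplex {
  cell : finType;
  deg : cell -> int;
  bd : cell -> cell -> int;
  bd_deg : forall x y, bd x y != 0 -> deg y = deg x - 1;
  bd_bd : forall x z, \sum_(y : cell) bd x y * bd y z = 0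
}.

Record fin_chain_complex := FinChainComplex {
  grp : int -> finZmodType;
  bdG : forall n : int, {additive grp n -> grp (n - 1)};
  bdG_bdG : forall (n : int) (g : grp n), bdG (n - 1) (bdG n g) = 0
}.

Section Setting.
Variables (C : cell_complex) (G : fin_chain_complex).

(* hom(C,G)^p = prod_n Hom(C_n, G_{n-p}) = prod_{x cell} G_{deg x - p} *)
Definition cochain (p : int) : finZmodType :=
  dprodZ (fun x : cell C => grp G (deg x - p)).

(* transport along an equality of degrees (0 if the degrees differ) *)
Definition gcast (m n : int) (g : grp G m) : grp G n :=
  match m =P n with
  | ReflectT e => ecast k (grp G k) e g
  | ReflectF _ => 0
  end.

(* (delta^p f)_n = f_{n-1} o bd^C_n - (-1)^p bd^G_{n-p} o f_n, evaluated on the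
   basis element x of C_n. *)
Definition delta (p : int) (f : cochain p) : cochain (p + 1) :=
  @finfun (cell C) (fun x => grp G (deg x - (p + 1))) (fun x =>
    \sum_(y : cell C) (gcast (deg x - (p + 1)) (f y)) *~ bd x y
    - (gcast (deg x - (p + 1)) (@bdG G (deg x - p) (f x))) *~ ((-1) ^ p)).

Definition ker_delta0 : {set cochain 0} := [set f | delta (p := 0) f == 0].
Definition im_delta_m1 : {set cochain 0} :=
  [set (delta t : cochain 0) | t : cochain (-1)].

Definition H0 : {set coset_of im_delta_m1} := (ker_delta0 / im_delta_m1)%g.

Definition U1char (m : cochain 0 -> algC) :=
  (forall a b, m (a + b) = m a * m b) /\ (forall a, `|m a| = 1).

Definition delta_0 (m : cochain 0 -> algC) : cochain (-1) -> algC :=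
  fun t => m (delta t).
Definition in_ker_delta_0 (m : cochain 0 -> algC) :=
  forall t, delta_0 m t = 1.

(* Characters of H^0(C,G) (a subgroup of coset_of im_delta_m1), U(1)-valued;
   two characters are equal iff they agree on H0. *)
Definition H0char (chi : coset_of im_delta_m1 -> algC) :=
  {in H0 &, forall a b, chi (a * b)%g = chi a * chi b} /\
  {in H0, forall a, `|chi a| = 1}.

Definition mbar (m : cochain 0 -> algC) (c : coset_of im_delta_m1) : algC :=
  m (repr c).

(* Hilbert space H = (x)_n (x)_{x in K_n} C[G_n], with basis |f>, f in hom^0: *)
(* a vector is its family of coordinates in that basis.                    *)
Definition hspace := {ffun cochain 0 -> algC}.
Definition ket (f : cochain 0) : hspace := [ffun g => (g == f)%:R].
Definition Qop (m : cochain 0 -> algC) (v : hspace) : hspace :=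
  [ffun g => m g * v g].
(* P_t |f> = |f + t> *)
Definition Pop (t : cochain 0) (v : hspace) : hspace := [ffun g => v (g - t)].
Definition A0 (v : hspace) : hspace :=
  [ffun g => (#|cochain (-1)|%:R)^-1 *
               \sum_(t : cochain (-1)) Pop (delta t) v g].

Definition equivQ (m m' : cochain 0 -> algC) :=
  forall f, f \in ker_delta0 -> exists lam : algC,
    Qop m (A0 (ket f)) = [ffun g => lam * A0 (ket f) g] /\
    Qop m' (A0 (ket f)) = [ffun g => lam * A0 (ket f) g].

End Setting.

From mathcomp Require Import all_boot all_algebra all_fingroup all_field all_character.
Set Implicit Arguments. Unset Strict Implicit. Unset Printing Implicit Defensive.
Import GRing.Theory Num.Theory FinRing.Theory.
Local Open Scope group_scope.
Local Open Scope ring_scope.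

(* H^0(C,G) = ker d^0 / im d^-1 is a subgroup of the finite abelian group
   hom^0 / im d^-1.  A character m with d_0 m = 1 is trivial on im d^-1, hence
   constant on its cosets, so mbar is a well-defined character of H^0.  The
   ground state A_0|f> is supported on f + im d^-1, where Q_m acts by the
   scalar m(f): thus Q_m and Q_m' are equivalent iff m = m' on ker d^0, i.e.
   iff mbar = mbar'.  For surjectivity, a character of H^0 is a linear
   character of a subgroup of the abelian group hom^0 / im d^-1; any
   irreducible constituent of its induced character extends it to the whole
   group, and composing with the quotient map yields m. *)

Section LinearCharacters.
Variable gT : finGroupType.

Lemma morph_lin_char (H : {group gT}) (chi : gT -> algC) :
    {in H &, {morph chi : x y / (x * y)%g >-> x * y}} -> chi 1%g != 0 ->
  exists2 xi : 'CF(H), xi \is a linear_char & {in H, xi =1 chi}.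
Proof.
move=> chiM chi1_neq0.
have chi1 : chi 1%g = 1.
  by apply: (mulfI chi1_neq0); rewrite -chiM ?mulg1 ?mulr1.
pose rH x : 'M[algC]_1 := (chi x)%:M.
have rH_repr : mx_repr H rH.
  by split=> [|x y Hx Hy]; rewrite /rH ?chi1 ?chiM ?scalar_mxM.
exists (cfRepr (MxRepresentation rH_repr)) => [|x Hx].
  by rewrite qualifE /= cfRepr_char cfRepr1 eqxx.
by rewrite cfunE Hx mulr1n /= mxtrace_scalar.
Qed.

Lemma lin_char_extend (G H : {group gT}) (xi : 'CF(H)) :
    abelian G -> H \subset G -> xi \is a linear_char ->
  exists2 phi : 'CF(G), phi \is a linear_char & 'Res[H] phi = xi.
Proof.
move=> cGG sHG /lin_char_irr/irrP[j ->].
have [i iInd] := neq0_has_constt (Ind_irr_neq0 j sHG).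
have lin_i : 'chi[G]_i \is a linear_char by apply/char_abelianP.
exists 'chi_i => //.
have [k Dk] := irrP (lin_char_irr (cfRes_lin_char H lin_i)).
by move: iInd; rewrite constt_Ind_Res Dk constt_irr inE => /eqP->.
Qed.

End LinearCharacters.

Section ZmodCosets.
Variables (V : finZmodType) (B : {group V}).

Lemma zmod_norm (x : V) : x \in 'N(B).
Proof. exact: subsetP (sub_abelian_norm (zmod_abelian _) (subsetT B)) x (in_setT x). Qed.

Lemma cosetD (x y : V) : coset B (x + y) = (coset B x * coset B y)%g.
Proof. by rewrite -zmodMgE morphM ?zmod_norm. Qed.

Variable m : V -> algC.
Hypotheses (mD : {morph m : x y / x + y >-> x * y}) (mB : {in B, forall b, m b = 1}).

Lemma char_coset_eq (x y : V) : coset B x = coset B y -> m x = m y.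
Proof.
move/kercoset_rcoset => /(_ (zmod_norm x) (zmod_norm y))[b Bb ->].
by rewrite zmodMgE mD mB ?mul1r.
Qed.

Lemma char_repr_coset (x : V) : m (repr (coset B x)) = m x.
Proof. by apply: char_coset_eq; rewrite coset_reprK. Qed.

Lemma char_reprM (a b : coset_of B) : m (repr (a * b)%g) = m (repr a) * m (repr b).
Proof.
by rewrite -{1}(coset_reprK a) -{1}(coset_reprK b) -cosetD char_repr_coset mD.
Qed.

End ZmodCosets.

Section CochainComplex.
Variables (C : cell_complex) (G : fin_chain_complex).

Lemma gcastD (m n : int) : {morph @gcast G m n : a b / a + b}.
Proof.
move=> a b; rewrite /gcast; case: eqP => [e|_]; last by rewrite addr0.
by case: n / e.
Qed.

Lemma deltaD (p : int) : {morph @delta C G p : f g / f + g}.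
Proof.
move=> f g; apply/ffunP => x; rewrite !ffunE (raddfD (bdG G _)) gcastD mulrzDl.
under eq_bigr => y _ do rewrite !ffunE gcastD mulrzDl.
by rewrite big_split /= -addrACA -opprD.
Qed.

Lemma delta0 (p : int) : delta (0 : cochain C G p) = 0.
Proof. by apply: (@addrI _ (delta (0 : cochain C G p))); rewrite -deltaD !addr0. Qed.

Lemma im_delta_m1_group_set : group_set (im_delta_m1 C G).
Proof.
apply/group_setP; split; first by apply/imsetP; exists 0; rewrite ?delta0.
move=> _ _ /imsetP[s _ ->] /imsetP[t _ ->].
by apply/imsetP; exists (s + t); rewrite ?deltaD.
Qed.

Lemma ker_delta0_group_set : group_set (ker_delta0 C G).
Proof.
apply/group_setP; split; first by rewrite inE delta0.
by move=> f g; rewrite !inE zmodMgE deltaD => /eqP-> /eqP->; rewrite addr0.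
Qed.

Canonical im_delta_m1_group := Group im_delta_m1_group_set.
Canonical ker_delta0_group := Group ker_delta0_group_set.

Local Notation B := (im_delta_m1 C G).
Local Notation cochain0 := (cochain C G 0).

Lemma in_ker_delta_0_im (m : cochain0 -> algC) :
  in_ker_delta_0 m -> {in B, forall f, m f = 1}.
Proof. by move=> mk _ /imsetP[t _ ->]; apply: mk. Qed.

Lemma H0P (a : coset_of B) :
  reflect (exists2 f, f \in ker_delta0 C G & a = coset B f) (a \in H0 C G).
Proof.
apply: (iffP idP) => [|[f kf ->]]; last exact: mem_quotient.
by rewrite /H0 -imset_coset => /imsetP.
Qed.

Lemma A0_ketE (f g : cochain0) :
  A0 (ket f) g = #|cochain C G (-1)|%:R^-1 *
                 \sum_(t : cochain C G (-1)) (g - (delta t : cochain0) == f)%:R.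
Proof. by rewrite ffunE; congr (_ * _); apply: eq_bigr => t _; rewrite !ffunE. Qed.

Lemma A0_ket_support (f g : cochain0) :
  A0 (ket f) g != 0 -> exists t : cochain C G (-1), g = f + (delta t : cochain0).
Proof.
rewrite A0_ketE mulf_eq0 negb_or => /andP[_].
have [t /eqP <- | none] :=
    pickP (fun t : cochain C G (-1) => g - (delta t : cochain0) == f).
  by exists t; rewrite subrK.
by rewrite big1 ?eqxx // => t _; rewrite none.
Qed.

Lemma A0_ket_self (f : cochain0) : A0 (ket f) f != 0.
Proof.
rewrite A0_ketE mulf_neq0 ?invr_eq0 -?natr_sum ?pnatr_eq0 -?lt0n //.
  by apply/card_gt0P; exists 0.
by rewrite (bigD1 0) //= delta0 subr0 eqxx.
Qed.

Section KernelCharacter.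
Variable m : cochain0 -> algC.
Hypotheses (mU : U1char m) (mk : in_ker_delta_0 m).

Lemma mbar_coset (f : cochain0) : mbar m (coset B f) = m f.
Proof. exact: char_repr_coset (proj1 mU) (in_ker_delta_0_im mk) f. Qed.

Lemma mbar_H0char : H0char (mbar m).
Proof.
split=> [a b _ _|a _]; last exact: (proj2 mU).
exact: char_reprM (proj1 mU) (in_ker_delta_0_im mk) a b.
Qed.

Lemma Qop_A0_ket (f : cochain0) :
  Qop m (A0 (ket f)) = [ffun g => m f * A0 (ket f) g].
Proof.
apply/ffunP => g; rewrite ffunE [RHS]ffunE.
have [->|/A0_ket_support[t ->]] := eqVneq (A0 (ket f) g) 0; first by rewrite !mulr0.
by case: mU => mD _; rewrite mD -/(delta_0 m t) mk mulr1.
Qed.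

End KernelCharacter.

Section TwoKernelCharacters.
Variables m m' : cochain0 -> algC.
Hypotheses (mU : U1char m) (mk : in_ker_delta_0 m).
Hypotheses (mU' : U1char m') (mk' : in_ker_delta_0 m').

Lemma equivQ_ker : equivQ m m' <-> {in ker_delta0 C G, m =1 m'}.
Proof.
split=> [eqQ f kf | eq_mm' f kf]; last first.
  by exists (m f); rewrite {2}eq_mm' // !Qop_A0_ket.
have [lam []] := eqQ f kf; rewrite !Qop_A0_ket //.
move: (A0 (ket f)) (A0_ket_self f) => v v_f /ffunP/(_ f) + /ffunP/(_ f).
by rewrite !ffunE => e e'; rewrite (mulIf v_f e) (mulIf v_f e').
Qed.

Lemma mbar_eq_H0 : {in H0 C G, mbar m =1 mbar m'} <-> {in ker_delta0 C G, m =1 m'}.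
Proof.
split=> [eq_mbar f kf | eq_mm' _ /H0P[f kf ->]]; last by rewrite !mbar_coset // eq_mm'.
by have := eq_mbar _ (mem_quotient _ kf); rewrite !mbar_coset.
Qed.

End TwoKernelCharacters.

Lemma mbar_surj (chi : coset_of B -> algC) : H0char chi ->
  exists m : cochain0 -> algC,
    [/\ U1char m, in_ker_delta_0 m & {in H0 C G, mbar m =1 chi}].
Proof.
case=> chiM chiN; pose H0_group := (ker_delta0_group / im_delta_m1_group)%G.
have chi1_neq0 : chi 1%g != 0 by rewrite -normr_eq0 chiN ?oner_eq0 ?(group1 H0_group).
have [xi lin_xi xiE] := morph_lin_char (H := H0_group) chiM chi1_neq0.
have abelian_quo : abelian [set: coset_of B].
  by rewrite -(quotientT im_delta_m1_group) quotient_abelian ?zmod_abelian.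
have sub_quo : H0_group \subset [set: coset_of B]%G by apply: subsetT.
have [phi lin_phi phiE] := lin_char_extend abelian_quo sub_quo lin_xi.
exists (fun f => phi (coset B f)); split.
- split=> [f g|f]; last by rewrite normC_lin_char ?inE.
  by rewrite cosetD (lin_charM lin_phi) ?inE.
- by move=> t; rewrite /delta_0 coset_id ?lin_char1 //; apply: imset_f.
- by move=> a Ha; rewrite /mbar coset_reprK -xiE // -phiE cfResE.
Qed.

End CochainComplex.

Theorem proposition7 (C : cell_complex) (G : fin_chain_complex) :
  (* the assignment m |-> mbar, mbar([f]) = m(f), is well defined and lands
     in the character group of H^0(C,G) *)
  (forall m : cochain C G 0 -> algC, U1char m -> in_ker_delta_0 m ->
     (forall f g, f \in ker_delta0 C G -> g \in ker_delta0 C G ->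
        coset (im_delta_m1 C G) f = coset (im_delta_m1 C G) g -> m f = m g)
     /\ (forall f, f \in ker_delta0 C G -> mbar m (coset (im_delta_m1 C G) f) = m f)
     /\ H0char (mbar m))
  (* equivalence of Q_m, Q_m' (same eigenvalue on every ground state) is
     agreement on ker delta^0, and is exactly equality of the induced characters
     (injectivity on classes) *)
  /\ (forall m m' : cochain C G 0 -> algC,
        U1char m -> in_ker_delta_0 m -> U1char m' -> in_ker_delta_0 m' ->
        (equivQ m m' <-> {in ker_delta0 C G, m =1 m'})
        /\ (equivQ m m' <-> {in H0 C G, mbar m =1 mbar m'}))
  (* surjectivity onto the character group of H^0(C,G) *)
  /\ (forall chi : coset_of (im_delta_m1 C G) -> algC, H0char chi ->
        exists m : cochain C G 0 -> algC,
          [/\ U1char m, in_ker_delta_0 m & {in H0 C G, mbar m =1 chi}]).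
Proof.
split; [|split]; last exact: mbar_surj.
- move=> m mU mk; split; [|split]; last exact: mbar_H0char.
  + by move=> f g _ _; apply: (char_coset_eq (proj1 mU) (in_ker_delta_0_im mk)).
  + by move=> f _; apply: mbar_coset.
- move=> m m' mU mk mU' mk'; have eqQ_ker := equivQ_ker mU mk mU' mk'.
  by split=> //; apply: iff_trans eqQ_ker (iff_sym (mbar_eq_H0 mU mk mU' mk')).
Qed.
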